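(* Let $k>1$ be an integer and let $n$ be a pseudoprime of basis $k$. Let $\Pi_n$ denote the number of periodic points of prime period $n$ of the circle map $f(\theta)=k\theta \pmod{2\pi}$. Then $$\frac{k^{n}-k-\Pi_n}{n}\in\mathbb{N}.$$
   Context: A positive integer $n$ is called a pseudoprime of basis $k$ (where $k>1$ is an integer) if $n$ is an odd composite number, $\gcd(n,k)=1$, and $k^{n-1}\equiv 1 \pmod n$. The circle map with parameter $k$ is $f:S^1\to S^1$, $f(\theta)=k\theta \pmod{2\pi}$, where $\theta\in[0,2\pi)$ is the angular coordinate on the unit circle $S^1$. A point $\theta$ is a periodic point of prime (i.e. least) period $n$ if $f^{n}(\theta)=\theta$ and $f^{m}(\theta)\neq\theta$ for $0<m<n$; $\Pi_n$ is the number of such points. $\mathbb{N}$ denotes the positive integers. *)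

From Stdlib Require Import Reals Lra Lia ZArith Arith List Znumtheory.
Open Scope R_scope.

Definition pseudoprime (k n : nat) : Prop :=
  Nat.odd n = true /\
  (1 < n)%nat /\ ~ prime (Z.of_nat n) /\
  Nat.gcd n k = 1%nat /\
  ((k ^ (n - 1)) mod n = 1 mod n)%nat.

Definition mod2pi (x : R) : R :=
  x - 2 * PI * IZR (Int_part (x / (2 * PI))).

Definition circle_map (k : nat) (theta : R) : R := mod2pi (INR k * theta).

Definition prime_period_point (k n : nat) (theta : R) : Prop :=
  0 <= theta < 2 * PI /\
  Nat.iter n (circle_map k) theta = theta /\
  (forall m : nat, (0 < m < n)%nat -> Nat.iter m (circle_map k) theta <> theta).

(* The points of period dividing n of θ ↦ kθ are the angles 2πj/(k^n - 1),
   on which the map acts as the permutation j ↦ kj mod (k^n - 1) of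
   Z/(k^n - 1). The points of least period n therefore split into orbits of
   size n, so n divides Π_n. As n is composite it has a divisor 1 < d < n, and
   the k^d - 1 points fixed by f^d do not have least period n, whence
   Π_n <= k^n - k^d < k^n - k. Finally k^(n-1) ≡ 1 (mod n) gives
   n | k^n - k, so k^n - k - Π_n is a positive multiple of n. *)

From Stdlib Require Import Reals ZArith List FinFun Lra Lia Znumtheory.
From mathcomp Require ssreflect ssrfun ssrbool eqtype ssrnat seq fintype fingraph div finset binomial zify.

Definition least_period {T : Type} (h : T -> T) (n : nat) (x : T) : Prop :=
  Nat.iter n h x = x /\ (forall m : nat, (0 < m < n)%nat -> Nat.iter m h x <> x).

Lemma least_period_conj {A B : Type} (phi : A -> B) (g : A -> A) (h : B -> B) n x :
  Injective phi -> (forall y, phi (g y) = h (phi y)) ->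
  least_period h n (phi x) <-> least_period g n x.
Proof.
  intros phi_inj conj.
  assert (iter_conj : forall m, Nat.iter m h (phi x) = phi (Nat.iter m g x)).
  { induction m as [|m IH]; simpl; [reflexivity | now rewrite IH, conj]. }
  unfold least_period; setoid_rewrite iter_conj.
  split; intros [fixed least]; split.
  - now apply phi_inj.
  - intros m hm eq_m; apply (least m hm); now rewrite eq_m.
  - now rewrite fixed.
  - intros m hm eq_m; apply (least m hm), phi_inj, eq_m.
Qed.

Definition mulmod (N k j : nat) : nat := (k * j) mod N.

Module MulModOrbits.
Set Warnings "-notation-overridden".
Set Implicit Arguments.
Unset Strict Implicit.
Local Open Scope nat_scope.
Import ssreflect ssrfun ssrbool eqtype ssrnat seq fintype fingraph div finset binomial zify.

Lemma iterE (T : Type) (f : T -> T) n x : iter n f x = Nat.iter n f x.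
Proof. by elim: n => //= n ->. Qed.

Lemma least_periodE (T : Type) (f : T -> T) n x :
  least_period f n x <-> iter n f x = x /\ (forall m, 0 < m < n -> iter m f x <> x).
Proof.
rewrite /least_period iterE; split=> -[fix_n least]; split=> // m.
- by move=> /andP[/ltP m_gt0 /ltP m_lt_n]; rewrite iterE; apply: least.
- by move=> [/ltP m_gt0 /ltP m_lt_n]; rewrite -iterE; apply: least; rewrite m_gt0.
Qed.

Lemma inP (T : eqType) (s : seq T) x : reflect (List.In x s) (x \in s).
Proof.
elim: s => [|y s IHs] /=; first by right.
rewrite in_cons; apply: (iffP orP) => [[/eqP-> | /IHs]|[-> | /IHs]]; by [left | right].
Qed.

Lemma uniq_NoDup (T : eqType) (s : seq T) : uniq s -> List.NoDup s.
Proof.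
elim: s => [|x s IHs] /=; first by constructor.
by case/andP=> /inP x_notin /IHs; constructor.
Qed.

Lemma length_size (T : Type) (s : seq T) : List.length s = size s.
Proof. by elim: s => //= x s ->. Qed.

Lemma pow_expn m n : Nat.pow m n = m ^ n.
Proof. by elim: n => // n IHn; rewrite expnS -IHn. Qed.

Section InjectiveOrbits.
Variables (T : finType) (f : T -> T).
Hypothesis f_inj : injective f.

Lemma order_set_fclosed n : fclosed f (order_set f n).
Proof.
by move=> x _ /eqP <-; rewrite !inE (order_id_cycle (cycle_orbit f_inj x)).
Qed.

Lemma dvdn_card_order_set n : n %| #|order_set f n|.
Proof.
rewrite -(fcard_order_set f_inj (subxx _) (order_set_fclosed n)).
exact: dvdn_mull.
Qed.

Lemma order_set_least_period n x :
  0 < n -> x \in order_set f n <-> least_period f n x.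
Proof.
move=> n_gt0; rewrite inE least_periodE.
have not_fixed m : 0 < m < order f x -> iter m f x <> x.
  move=> /andP[m_gt0 m_lt] fix_m.
  by move: (findex_iter m_lt); rewrite fix_m findex0 => m0; rewrite -m0 in m_gt0.
split=> [/eqP <- | [fix_n least]]; first by split; [exact: iter_order|].
have [lt_o_n | lt_n_o | //] := ltngtP (order f x) n.
- by case: (least _ (introT andP (conj (order_gt0 f x) lt_o_n))); exact: iter_order.
- by case: (not_fixed n); rewrite ?n_gt0.
Qed.

Lemma card_order_set_fixed n d :
  0 < d < n -> #|order_set f n| + #|[pred x | iter d f x == x]| <= #|T|.
Proof.
move=> d_bounds; have [d_gt0 d_lt_n] := andP d_bounds.
rewrite -(cardC [pred x | iter d f x == x]) addnC leq_add2l.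
apply: subset_leq_card; apply/subsetP=> x.
rewrite order_set_least_period ?(ltn_trans d_gt0 d_lt_n) // least_periodE !inE.
by move=> [_ /(_ d d_bounds) not_fixed]; apply/eqP.
Qed.

End InjectiveOrbits.

Lemma mulmodE N k j : mulmod N k j = k * j %% N.
Proof.
case: N => [|N]; first by rewrite /mulmod Nat.mod_0_r modn0.
apply/esym/(Nat.mod_unique _ _ (k * j %/ N.+1)); first exact/ltP/ltn_pmod.
by rewrite multE plusE [_ * (_ %/ _)]mulnC -divn_eq.
Qed.

Lemma iter_mulmod N k m j : j < N -> iter m (mulmod N k) j = k ^ m * j %% N.
Proof.
move=> j_lt_N; elim: m => [|m IHm]; first by rewrite mul1n modn_small.
by rewrite iterS IHm mulmodE modnMmr expnS mulnA.
Qed.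

Section MulModModel.
Variables k n : nat.
Hypotheses (k_gt1 : 1 < k) (n_gt0 : 0 < n).
Local Notation N := (k ^ n - 1).

Lemma modulus_gt0 : 0 < N.
Proof. by rewrite subn_gt0 -(expn0 k) ltn_exp2l. Qed.

Definition mulmod_ord (i : 'I_N) : 'I_N := Ordinal (ltn_pmod (k * i) modulus_gt0).

Lemma val_iter_mulmod_ord m (i : 'I_N) :
  val (iter m mulmod_ord i) = iter m (mulmod N k) i.
Proof. by elim: m => //= m ->; rewrite mulmodE. Qed.

Lemma iter_mulmod_period j : j < N -> iter n (mulmod N k) j = j.
Proof.
move=> j_lt_N; rewrite iter_mulmod //.
have -> : k ^ n * j = j * N + j by rewrite mulnC -mulnSr subn1 prednK // expn_gt0 ltnW.
by rewrite modnMDl modn_small.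
Qed.

Lemma iter_mulmod_ord_period (i : 'I_N) : iter n mulmod_ord i = i.
Proof. by apply: val_inj; rewrite val_iter_mulmod_ord iter_mulmod_period. Qed.

Lemma mulmod_ord_inj : injective mulmod_ord.
Proof.
apply: (@can_inj _ _ _ (iter n.-1 mulmod_ord)) => i.
by rewrite -iterSr prednK // iter_mulmod_ord_period.
Qed.

Lemma card_fixed_mulmod_ord d :
  d %| n -> k ^ d - 1 <= #|[pred i | iter d mulmod_ord i == i]|.
Proof.
move=> d_dvd_n.
have /dvdnP [M N_eq] : k ^ d - 1 %| N.
  by rewrite -(divnK d_dvd_n) mulnC expnM !subn1 dvdn_pred_predX.
have M_gt0 : 0 < M by move: modulus_gt0; rewrite N_eq muln_gt0 => /andP[].
have mulM_lt t : t < k ^ d - 1 -> t * M < N.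
  by rewrite N_eq mulnC ltn_pmul2l.
have fixed_mulM t : t < k ^ d - 1 -> iter d (mulmod N k) (t * M) = t * M.
  move=> t_lt; rewrite iter_mulmod; last exact: mulM_lt.
  have -> : k ^ d * (t * M) = t * M * (k ^ d - 1) + t * M.
    by rewrite mulnC -mulnSr subn1 prednK // expn_gt0 ltnW.
  by rewrite -mulnA -N_eq modnMDl modn_small // mulM_lt.
pose h (t : 'I_(k ^ d - 1)) : 'I_N := Ordinal (mulM_lt t (ltn_ord t)).
have h_inj : injective h.
  by move=> t u /(congr1 val) /= /eqP; rewrite eqn_pmul2r // => /eqP /val_inj.
rewrite -[X in X <= _]card_ord -cardsT -(card_imset _ h_inj).
apply/subset_leq_card/subsetP => _ /imsetP[t _ ->]; rewrite inE.
by apply/eqP/val_inj; rewrite val_iter_mulmod_ord fixed_mulM.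
Qed.

End MulModModel.

Lemma least_period_residues k n d :
  (1 < k -> 1 < d -> d < n -> Nat.divide d n ->
  exists s : list nat,
    NoDup s /\
    (forall j, In j s <->
       j < Nat.pow k n - 1 /\ least_period (mulmod (Nat.pow k n - 1) k) n j) /\
    Nat.divide n (length s) /\
    length s + Nat.pow k d <= Nat.pow k n)%coq_nat.
Proof.
move=> /ltP k_gt1 /ltP d_gt1 /ltP d_lt_n [e n_eq]; rewrite !pow_expn.
have n_gt0 : 0 < n by apply: ltn_trans d_lt_n; apply: ltnW.
have d_dvd_n : d %| n by apply/dvdnP; exists e.
pose f := mulmod_ord k_gt1 n_gt0.
have f_inj : injective f by apply: mulmod_ord_inj.
have val_conj (i : 'I_(k ^ n - 1)) : val (f i) = mulmod (k ^ n - 1) k (val i).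
  by rewrite mulmodE.
have period_val (i : 'I_(k ^ n - 1)) :
    i \in order_set f n <-> least_period (mulmod (k ^ n - 1) k) n i.
  by rewrite order_set_least_period // (least_period_conj _ _ _ _ _ val_inj val_conj).
exists (map val (enum (order_set f n))).
rewrite length_size size_map -cardE; split; last split; last split.
- by apply/uniq_NoDup; rewrite map_inj_uniq ?enum_uniq //; apply: val_inj.
- move=> j; split.
  + move=> /inP /mapP [i]; rewrite mem_enum period_val => per ->.
    by split; first exact/ltP/ltn_ord.
  + move=> [/ltP j_lt per]; apply/inP/mapP; exists (Ordinal j_lt) => //.
    by rewrite mem_enum period_val.
- by have /dvdnP [q ->] := dvdn_card_order_set f_inj n; exists q.
- apply/leP.
  have := modulus_gt0 k_gt1 n_gt0; have : 0 < k ^ d by rewrite expn_gt0 ltnW.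
  have := leq_trans (leq_add (leqnn _) (card_fixed_mulmod_ord k_gt1 n_gt0 d_dvd_n))
    (card_order_set_fixed f_inj (introT andP (conj (ltnW d_gt1) d_lt_n))).
  (* [set] identifies two syntactically different instances of this cardinal *)
  rewrite card_ord; set a := #|order_set f n|; lia.
Qed.
End MulModOrbits.

Lemma pow_sub1_gt0 (k n : nat) : (1 < k)%nat -> (0 < n)%nat -> (0 < k ^ n - 1)%nat.
Proof. intros k_gt1 n_gt0; pose proof (Nat.pow_gt_1 k n k_gt1); lia. Qed.

Section CircleMap.
Local Open Scope R_scope.

Lemma mod2pi_shift (y : R) (z : Z) : 0 <= y < 2 * PI -> mod2pi (y + 2 * PI * IZR z) = y.
Proof.
  intros y_range. pose proof PI_RGT_0.
  assert (inv_pos : 0 < / (2 * PI)) by (apply Rinv_0_lt_compat; lra).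
  assert (inv_r : 2 * PI * / (2 * PI) = 1) by (field; lra).
  unfold mod2pi; replace (Int_part ((y + 2 * PI * IZR z) / (2 * PI))) with z; [ring|].
  replace ((y + 2 * PI * IZR z) / (2 * PI)) with (y / (2 * PI) + IZR z) by (field; lra).
  apply Int_part_spec; unfold Rdiv; nra.
Qed.

Lemma iter_circle_map (k m : nat) (x : R) :
  exists z : Z, Nat.iter m (circle_map k) x = INR k ^ m * x - 2 * PI * IZR z.
Proof.
  induction m as [|m [z IH]]; [exists 0%Z; simpl; ring|].
  exists (Z.of_nat k * z + Int_part (INR k * Nat.iter m (circle_map k) x / (2 * PI)))%Z.
  simpl Nat.iter; unfold circle_map at 1, mod2pi.
  rewrite IH, plus_IZR, mult_IZR, <- INR_IZR_INZ; simpl; ring.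
Qed.

Definition angle (N j : nat) : R := 2 * PI * INR j / INR N.

Lemma angle_range (N j : nat) : (j < N)%nat -> 0 <= angle N j < 2 * PI.
Proof.
  intros j_lt. pose proof PI_RGT_0. unfold angle.
  assert (INR j < INR N) by (apply lt_INR; exact j_lt).
  assert (0 <= INR j) by apply pos_INR.
  assert (inv_pos : 0 < / INR N) by (apply Rinv_0_lt_compat; lra).
  assert (inv_r : INR N * / INR N = 1) by (field; lra).
  assert (0 <= INR j * / INR N < 1) by nra.
  unfold Rdiv; rewrite Rmult_assoc; nra.
Qed.

Lemma angle_inj (N : nat) : (0 < N)%nat -> Injective (angle N).
Proof.
  intros N_gt0 i j eq_ij. pose proof PI_RGT_0.
  apply lt_0_INR in N_gt0. unfold angle in eq_ij.
  apply INR_eq, (Rmult_eq_reg_l (2 * PI)); [|lra].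
  apply (Rmult_eq_reg_r (/ INR N)); [exact eq_ij|].
  apply Rinv_neq_0_compat; lra.
Qed.

Lemma circle_map_angle (k N j : nat) :
  (0 < N)%nat -> circle_map k (angle N j) = angle N (mulmod N k j).
Proof.
  intros N_gt0. pose proof PI_RGT_0.
  assert (0 < INR N) by (apply lt_0_INR; exact N_gt0).
  assert (division : INR k * INR j = INR N * INR (k * j / N) + INR (mulmod N k j)).
  { rewrite <- mult_INR, <- mult_INR, <- plus_INR; apply f_equal, Nat.div_mod_eq. }
  unfold circle_map.
  replace (INR k * angle N j) with (angle N (mulmod N k j) + 2 * PI * IZR (Z.of_nat (k * j / N))).
  - apply mod2pi_shift, angle_range, Nat.mod_upper_bound; lia.
  - unfold angle; rewrite <- INR_IZR_INZ.
    replace (INR (mulmod N k j)) with (INR k * INR j - INR N * INR (k * j / N)) by lra.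
    field; lra.
Qed.

Lemma least_period_angle (k n N j : nat) : (0 < N)%nat ->
  least_period (circle_map k) n (angle N j) <-> least_period (mulmod N k) n j.
Proof.
  intros N_gt0; apply least_period_conj; [apply angle_inj, N_gt0|].
  intros i; symmetry; apply circle_map_angle, N_gt0.
Qed.

Lemma fixed_point_angle (k n : nat) (x : R) :
  (1 < k)%nat -> (0 < n)%nat -> 0 <= x < 2 * PI -> Nat.iter n (circle_map k) x = x ->
  exists j, (j < k ^ n - 1)%nat /\ x = angle (k ^ n - 1) j.
Proof.
  intros k_gt1 n_gt0 x_range fixed. pose proof PI_RGT_0.
  set (N := (k ^ n - 1)%nat).
  assert (N_gt0 : (0 < N)%nat) by (apply pow_sub1_gt0; assumption).
  assert (INR_N : INR N = INR k ^ n - 1).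
  { unfold N; rewrite minus_INR, pow_INR; [reflexivity | lia]. }
  assert (0 < INR N) by (apply lt_0_INR; exact N_gt0).
  destruct (iter_circle_map k n x) as [z iter_eq].
  assert (winding : x * INR N = 2 * PI * IZR z) by (rewrite INR_N; nra).
  assert (z_range : 0 <= IZR z < INR N) by nra.
  rewrite INR_IZR_INZ in z_range; destruct z_range as [z_ge0 z_lt].
  apply le_IZR in z_ge0; apply lt_IZR in z_lt.
  exists (Z.to_nat z); split; [lia|].
  unfold angle; rewrite INR_IZR_INZ, Z2Nat.id by exact z_ge0.
  rewrite <- winding; field; lra.
Qed.

(* [prime_period_point k n x] unfolds to [0 <= x < 2 * PI /\ least_period (circle_map k) n x]. *)
Lemma prime_period_point_angle (k n : nat) (x : R) : (1 < k)%nat -> (0 < n)%nat ->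
  prime_period_point k n x <->
  exists j, (j < k ^ n - 1)%nat /\ least_period (mulmod (k ^ n - 1) k) n j /\
            x = angle (k ^ n - 1) j.
Proof.
  intros k_gt1 n_gt0.
  assert (N_gt0 := pow_sub1_gt0 k n k_gt1 n_gt0).
  split.
  - intros [x_range period].
    destruct (fixed_point_angle k n x k_gt1 n_gt0 x_range (proj1 period)) as [j [j_lt ->]].
    exists j; split; [exact j_lt|split; [|reflexivity]].
    apply least_period_angle; [exact N_gt0 | exact period].
  - intros [j [j_lt [period ->]]]; split; [apply angle_range, j_lt|].
    apply least_period_angle; [exact N_gt0 | exact period].
Qed.

End CircleMap.

Lemma composite_proper_divisor (n : nat) :
  (1 < n)%nat -> ~ prime (Z.of_nat n) -> exists d, (1 < d < n)%nat /\ Nat.divide d n.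
Proof.
  intros n_gt1 not_prime.
  destruct (not_prime_divide (Z.of_nat n)) as [z [z_range [c n_eq]]]; [lia | exact not_prime |].
  assert (c_pos : (0 < c)%Z) by nia.
  exists (Z.to_nat z); split; [lia|].
  exists (Z.to_nat c); lia.
Qed.

Lemma pseudoprime_quotient (k n p : nat) :
  pseudoprime k n -> Nat.divide n p -> (p + k < k ^ n)%nat ->
  exists m : nat, (1 <= m)%nat /\
    (Z.of_nat k ^ Z.of_nat n - Z.of_nat k - Z.of_nat p = Z.of_nat n * Z.of_nat m)%Z.
Proof.
  intros [_ [n_gt1 [_ [_ fermat]]]] [c p_eq] p_lt.
  set (K := (k ^ (n - 1))%nat) in *.
  assert (K_mod : (K mod n = 1)%nat) by (rewrite fermat; apply Nat.mod_small; lia).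
  pose proof (Nat.div_mod_eq K n) as K_eq; rewrite K_mod in K_eq.
  assert (kn : (k ^ n = k * K)%nat) by (unfold K; rewrite <- Nat.pow_succ_r'; f_equal; lia).
  set (q := (K / n)%nat) in *.
  assert (c_lt : (c < k * q)%nat) by nia.
  exists (k * q - c)%nat; split; [lia|].
  rewrite <- Nat2Z.inj_pow, kn; nia.
Qed.

Theorem theorem1 (k n : nat) (hk : (1 < k)%nat) (hn : pseudoprime k n) :
  exists l : list R,
    NoDup l /\
    (forall theta : R, In theta l <-> prime_period_point k n theta) /\
    exists m : nat, (1 <= m)%nat /\
      (Z.of_nat k ^ Z.of_nat n - Z.of_nat k - Z.of_nat (length l))%Z
        = (Z.of_nat n * Z.of_nat m)%Z.
Proof.
  pose proof hn as [_ [n_gt1 [composite _]]].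
  destruct (composite_proper_divisor n n_gt1 composite) as [d [[d_gt1 d_lt_n] d_dvd_n]].
  destruct (MulModOrbits.least_period_residues hk d_gt1 d_lt_n d_dvd_n)
    as [s [s_nodup [s_spec [s_dvd s_bound]]]].
  assert (N_gt0 : (0 < k ^ n - 1)%nat) by (apply pow_sub1_gt0; lia).
  exists (map (angle (k ^ n - 1)) s); split; [|split].
  - apply Injective_map_NoDup; [apply angle_inj, N_gt0 | exact s_nodup].
  - intros x; rewrite in_map_iff, prime_period_point_angle by lia.
    split.
    + intros [j [<- j_in]]; exists j; apply s_spec in j_in; tauto.
    + intros [j [j_lt [period ->]]]; exists j; split; [reflexivity | now apply s_spec].
  - rewrite length_map; apply pseudoprime_quotient; [exact hn | exact s_dvd |].
    pose proof (Nat.pow_lt_mono_r k 1 d hk d_gt1) as k_lt; rewrite Nat.pow_1_r in k_lt; lia.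
Qed.
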